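(* Let $G=(V,E)$ and $H=(U,F)$ be finite simple graphs. If $G$ and $H$ are isomorphic, then the uniqueness tree algorithm (described in the context) applied to $G$ and $H$ outputs ''$G\cong H$''.
   Context: A simple graph is a finite, unweighted, undirected graph with no loops or multiple edges. $G\cong H$ means there is a bijection $f:V\to U$ such that for all $u,v\in V$, $f(u)f(v)\in F$ if and only if $uv\in E$. Let $n$ denote the number of vertices. The uniqueness tree algorithm consists of two stages. Tree generation: for each graph and each vertex $v$ of it, build a rooted tree $T(v)$ whose nodes are labelled by vertices of the graph, level by level. Level $0$ consists of the root, labelled $v$. A node on the current level is unique if its label occurs exactly once among the labels on that level. Each non-unique node becomes a leaf; each unique node labelled $u$ receives one child labelled $w$ for each neighbour $w$ of $u$ in the graph; these children form the next level. This is repeated while some node on the current level is unique and the height of $T(v)$ is less than $n$. Tree comparison: initially no vertex is mapped. For each unmapped $v\in V$ and, in turn, each unmapped $u\in U$, declare $v$ and $u$ equivalent unless one of the following holds: the heights of $T(v)$ and $T(u)$ differ; for some level, the numbers of nodes on that level of $T(v)$ and $T(u)$ differ; for some level and some $i\in\{1,\dots,n-1\}$, the number of nodes on that level having exactly $i$ children differs between $T(v)$ and $T(u)$. If $v$ and $u$ are equivalent, mark both as mapped. At the end, output ''$G\cong H$'' if all vertices of $V$ and $U$ have been mapped, and ''$G\not\cong H$'' otherwise. *)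

From mathcomp Require Import all_boot.
Set Implicit Arguments. Unset Strict Implicit. Unset Printing Implicit Defensive.

Definition simple_graph (V : finType) (e : rel V) : Prop :=
  symmetric e /\ irreflexive e.

Definition graph_iso (V U : finType) (eV : rel V) (eU : rel U) : Prop :=
  exists f : V -> U, bijective f /\ forall x y, eU (f x) (f y) = eV x y.

Section UniquenessTree.
Variables (V : finType) (e : rel V).

Definition neighbours (u : V) : seq V := [seq w <- enum V | e u w].

(* a node with label u on a level (list of labels) is unique iff
   u occurs exactly once among the labels of that level *)
Definition uniqueb (L : seq V) (u : V) : bool := count_mem u L == 1.

Definition next_level (L : seq V) : seq V :=
  flatten [seq (if uniqueb L u then neighbours u else [::]) | u <- L].

(* generation of the levels; k = remaining allowed height increase *)
Fixpoint gen_levels (k : nat) (L : seq V) : seq (seq V) :=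
  match k with
  | 0 => [:: L]
  | k'.+1 => if has (uniqueb L) L then L :: gen_levels k' (next_level L)
             else [:: L]
  end.

Definition tree_levels (v : V) : seq (seq V) := gen_levels #|V| [:: v].

(* height of T(v) = maximal depth of a node (an empty last level carries no node) *)
Definition tree_height (v : V) : nat :=
  (size [seq L <- tree_levels v | L != [::]]).-1.

Definition level_of (v : V) (l : nat) : seq V := nth [::] (tree_levels v) l.

Definition level_size (v : V) (l : nat) : nat := size (level_of v l).

(* number of children of a node labelled u on level l: nodes on the last
   generated level are leaves; otherwise unique nodes get deg(u) children *)
Definition nchildren (v : V) (l : nat) (u : V) : nat :=
  if (l.+1 < size (tree_levels v)) && uniqueb (level_of v l) u
  then size (neighbours u) else 0.

Definition count_children (v : V) (l i : nat) : nat :=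
  count (fun u => nchildren v l u == i) (level_of v l).

End UniquenessTree.

(* Levels beyond both trees are empty, so it
   suffices to range over levels below the larger number of levels. *)
Definition equivalent (V U : finType) (eV : rel V) (eU : rel U) (n : nat)
    (v : V) (u : U) : bool :=
  let N := maxn (size (tree_levels eV v)) (size (tree_levels eU u)) in
  [&& tree_height eV v == tree_height eU u,
      all (fun l => level_size eV v l == level_size eU u l) (iota 0 N)
    & all (fun l => all (fun i => count_children eV v l i == count_children eU u l i)
                        (iota 1 n.-1)) (iota 0 N)].

(* State: (list of still-unmapped vertices of U, in order; number of
   vertices of V left unmapped). *)
Definition compare_step (V U : finType) (eV : rel V) (eU : rel U)
    (st : seq U * nat) (v : V) : seq U * nat :=
  let: (remU, bad) := st in
  match [seq u <- remU | equivalent eV eU #|V| v u] with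
  | u :: _ => (rem u remU, bad)
  | [::] => (remU, bad.+1)
  end.

(* output: true means "G ≅ H" (all vertices of V and U mapped) *)
Definition uniqueness_tree_algorithm (V U : finType) (eV : rel V) (eU : rel U)
    (sV : seq V) (sU : seq U) : bool :=
  let: (remU, bad) := foldl (compare_step eV eU) (sU, 0) sV in
  (bad == 0) && (remU == [::]).

From mathcomp Require Import all_boot zify.
Set Implicit Arguments. Unset Strict Implicit. Unset Printing Implicit Defensive.

(* An isomorphism f relabels every uniqueness tree: level l of T(f x) is a
   permutation of the f-image of level l of T(x), because uniqueness of a
   label and neighbourhoods are preserved by f.  Hence x and f x have the
   same tree invariants, so "equivalent" between G and H is the pull-back
   along f^-1 of an equivalence relation on V.  Since f is a bijection, every
   equivalence class has as many unmapped vertices in V as in U at every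
   stage of the greedy comparison, so every vertex finds a partner. *)

Section All2.
Variables (S T : Type) (r : S -> T -> bool).

Lemma all2_size s t : all2 r s t -> size s = size t.
Proof. by rewrite all2E => /andP[/eqP]. Qed.

Lemma all2_nth x0 y0 s t : r x0 y0 -> all2 r s t ->
  forall i, r (nth x0 s i) (nth y0 t i).
Proof.
move=> r0; elim: s t => [|x s IHs] [|y t] //= => [_ i | /andP[rxy rst] [|i]] //=.
- by rewrite !nth_nil.
- exact: IHs.
Qed.

Lemma all2_count (p : pred S) (q : pred T) s t :
  (forall x y, r x y -> p x = q y) -> all2 r s t -> count p s = count q t.
Proof.
move=> pq; elim: s t => [|x s IHs] [|y t] //= /andP[rxy rst].
by rewrite (pq _ _ rxy) (IHs _ rst).
Qed.

End All2.

Lemma perm_flatten_map (T S : eqType) (h1 h2 : T -> seq S) (s : seq T) :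
  (forall x, perm_eq (h1 x) (h2 x)) ->
  perm_eq (flatten (map h1 s)) (flatten (map h2 s)).
Proof. by move=> h12; elim: s => //= x s IHs; apply: perm_cat. Qed.

Section Relabelling.
Variables (V U : finType) (eV : rel V) (eU : rel U) (f : V -> U) (g : U -> V).
Hypotheses (fK : cancel f g) (gK : cancel g f).
Hypothesis f_edge : forall x y, eU (f x) (f y) = eV x y.

Let f_inj : injective f := can_inj fK.
Let relabelled (X : seq U) (Y : seq V) := perm_eq X (map f Y).

Lemma neighbours_iso x :
  perm_eq (neighbours eU (f x)) (map f (neighbours eV x)).
Proof.
apply: uniq_perm; first exact/filter_uniq/enum_uniq.
  by rewrite (map_inj_uniq f_inj); exact/filter_uniq/enum_uniq.
move=> w; rewrite -(gK w) (mem_map f_inj) !mem_filter f_edge.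
by rewrite -!enumT !mem_enum.
Qed.

Lemma uniqueb_iso L' L : relabelled L' L ->
  forall x, uniqueb L' (f x) = uniqueb L x.
Proof.
move=> LL' x; rewrite /uniqueb (permP LL') count_map.
by congr (_ == _); apply: eq_count => y /=; rewrite inj_eq.
Qed.

Lemma next_level_iso L' L : relabelled L' L ->
  relabelled (next_level eU L') (next_level eV L).
Proof.
move=> LL'; rewrite /relabelled /next_level map_flatten -map_comp.
apply: perm_trans (perm_flatten (perm_map _ LL')) _.
rewrite -map_comp; apply: perm_flatten_map => x /=.
by rewrite (uniqueb_iso LL'); case: (uniqueb L x) => //; apply: neighbours_iso.
Qed.

Lemma gen_levels_iso k L' L : relabelled L' L ->
  all2 relabelled (gen_levels eU k L') (gen_levels eV k L).
Proof.
elim: k L' L => [|k IHk] L' L LL' /=; first by rewrite LL'.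
have -> : has (uniqueb L') L' = has (uniqueb L) L.
  by rewrite (perm_has _ LL') has_map; apply: eq_has; apply: uniqueb_iso.
by case: (has _ L); rewrite /= LL' // IHk //; apply: next_level_iso.
Qed.

Lemma tree_levels_iso x :
  all2 relabelled (tree_levels eU (f x)) (tree_levels eV x).
Proof.
rewrite /tree_levels -(bij_eq_card (Bijective fK gK)).
by apply: gen_levels_iso; rewrite /relabelled perm_refl.
Qed.

Lemma level_of_iso x l : relabelled (level_of eU (f x) l) (level_of eV x l).
Proof. exact: all2_nth (tree_levels_iso x) l. Qed.

Lemma tree_height_iso x : tree_height eU (f x) = tree_height eV x.
Proof.
rewrite /tree_height !size_filter; congr (_.-1).
apply: all2_count (tree_levels_iso x) => X Y /perm_size.
by rewrite size_map -!size_eq0 => ->.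
Qed.

Lemma level_size_iso x l : level_size eU (f x) l = level_size eV x l.
Proof. by rewrite /level_size (perm_size (level_of_iso x l)) size_map. Qed.

Lemma nchildren_iso x l y : nchildren eU (f x) l (f y) = nchildren eV x l y.
Proof.
rewrite /nchildren (all2_size (tree_levels_iso x)) (uniqueb_iso (level_of_iso x l)).
by case: (_ && _); rewrite // (perm_size (neighbours_iso y)) size_map.
Qed.

Lemma count_children_iso x l i :
  count_children eU (f x) l i = count_children eV x l i.
Proof.
rewrite /count_children (permP (level_of_iso x l)) count_map.
by apply: eq_count => y /=; rewrite nchildren_iso.
Qed.

Lemma equivalent_iso n v x : equivalent eV eU n v (f x) = equivalent eV eV n v x.
Proof.
rewrite /equivalent (all2_size (tree_levels_iso x)) tree_height_iso.
congr [&& _, _ & _]; apply: eq_all => l /=; first by rewrite level_size_iso.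
by apply: eq_all => i /=; rewrite count_children_iso.
Qed.

End Relabelling.

Lemma level_of_default (T : finType) (e : rel T) v l :
  size (tree_levels e v) <= l -> level_of e v l = [::].
Proof. exact: nth_default. Qed.

Section EquivalentCharacterization.
Variables (V U : finType) (eV : rel V) (eU : rel U) (n : nat).

Lemma equivalentP v u :
  reflect [/\ tree_height eV v = tree_height eU u,
              forall l, level_size eV v l = level_size eU u l &
              forall l i, 0 < i < n -> count_children eV v l i = count_children eU u l i]
          (equivalent eV eU n v u).
Proof.
have iotaE i : (i \in iota 1 n.-1) = (0 < i < n) by rewrite mem_iota; lia.
apply: (iffP and3P) => [[/eqP hvu /allP sizes /allP counts] | [hvu sizes counts]].
  set N := maxn _ _ in sizes counts.
  have beyond l : N <= l -> level_of eV v l = [::] /\ level_of eU u l = [::].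
    by rewrite geq_max => /andP[lv lu]; rewrite !level_of_default.
  split=> // [l | l i]; case: (ltnP l N) => lN.
  - by apply/eqP/sizes; rewrite mem_iota.
  - by rewrite /level_size; case: (beyond l lN) => -> ->.
  - rewrite -iotaE => i_n.
    have l_N : l \in iota 0 N by rewrite mem_iota.
    by have /allP/(_ i i_n)/eqP := counts l l_N.
  - by rewrite /count_children; case: (beyond l lN) => -> ->.
split; first exact/eqP.
  by apply/allP => l _; apply/eqP.
by apply/allP => l _; apply/allP => i; rewrite iotaE => i_n; apply/eqP/counts.
Qed.

End EquivalentCharacterization.

Section TreeEquivalence.
Variables (V : finType) (e : rel V) (n : nat).

Lemma equivalent_refl : reflexive (equivalent e e n).
Proof. by move=> v; apply/equivalentP. Qed.

Lemma equivalent_sym : symmetric (equivalent e e n).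
Proof.
suff sym v x : equivalent e e n v x -> equivalent e e n x v.
  by move=> v x; apply/idP/idP; apply: sym.
case/equivalentP => hvx sizes counts; apply/equivalentP.
by split=> [| l | l i i_n]; rewrite ?hvx ?sizes ?counts.
Qed.

Lemma equivalent_trans : transitive (equivalent e e n).
Proof.
move=> x v y /equivalentP[h1 s1 c1] /equivalentP[h2 s2 c2]; apply/equivalentP.
by split=> [| l | l i i_n]; rewrite ?h1 ?s1 ?c1 ?h2 ?s2 ?c2.
Qed.

End TreeEquivalence.

Section GreedyComparison.
Variables (V U : finType) (eV : rel V) (eU : rel U) (R : rel V) (g : U -> V).
Hypotheses (R_refl : reflexive R) (R_sym : symmetric R) (R_trans : transitive R).
Hypothesis equivalentE : forall v u, equivalent eV eU #|V| v u = R v (g u).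

Lemma compare_steps_complete s remU :
  (forall x, count (R x) (map g remU) = count (R x) s) ->
  foldl (compare_step eV eU) (remU, 0) s = ([::], 0).
Proof.
elim: s remU => [|v s IHs] remU balanced /=.
  by case: remU balanced => // u remU /(_ (g u)); rewrite /= R_refl.
rewrite (eq_filter (equivalentE v)).
case partners: [seq u <- remU | R v (g u)] => [|u others].
  have := balanced v; rewrite /= R_refl count_map -size_filter.
  by rewrite /preim /= partners.
have /[!mem_filter] /andP[vu u_remU] : u \in [seq u <- remU | R v (g u)].
  by rewrite partners mem_head.
apply: IHs => x; rewrite !count_map count_rem u_remU -count_map balanced /=.
have -> : R x (g u) = R x v.
  apply/idP/idP => [xu | xv]; last exact: R_trans xv vu.
  by apply: R_trans xu _; rewrite R_sym.
by case: (R x v); rewrite /= ?subn0 // addnC addnK.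
Qed.

End GreedyComparison.

Lemma perm_map_enum (V U : finType) (g : U -> V) :
  bijective g -> perm_eq (map g (enum U)) (enum V).
Proof.
case=> h gK hK; apply: uniq_perm; rewrite ?(map_inj_uniq (can_inj gK)) ?enum_uniq //.
by move=> x; rewrite mem_enum -(hK x) map_f ?mem_enum.
Qed.

Theorem theorem2 (V U : finType) (eV : rel V) (eU : rel U)
    (sV : seq V) (sU : seq U) :
  simple_graph eV -> simple_graph eU ->
  perm_eq sV (enum V) -> perm_eq sU (enum U) ->
  graph_iso eV eU ->
  uniqueness_tree_algorithm eV eU sV sU.
Proof.
move=> _ _ sV_enum sU_enum [f [[g fK gK] f_edge]].
have equivalentE v u : equivalent eV eU #|V| v u = equivalent eV eV #|V| v (g u).
  by rewrite -{1}(gK u) (equivalent_iso fK gK f_edge).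
have g_sU : perm_eq (map g sU) sV.
  apply: perm_trans (perm_map g sU_enum) _.
  by rewrite (perm_trans (perm_map_enum (Bijective gK fK))) // perm_sym.
rewrite /uniqueness_tree_algorithm (compare_steps_complete (@equivalent_refl _ _ _)
  (@equivalent_sym _ _ _) (@equivalent_trans _ _ _) equivalentE) //.
by move/permP: g_sU.
Qed.
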